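(* Let $\mathbb K=\mathbb U(2)\oplus\mathbb U(2)$, $\mathbf v=(1,0,0,0)\in\mathbb K$, let $\gamma\in A_{\mathbb K}\setminus\{0\}$ be odd, let $d_1\in\mathbb K^\vee$ with $\bar d_1=\gamma$, let $d_2\in\mathbb E_8(2)^\vee$ with $q_{\mathbb E_8(2)}(\bar d_2)=q_{\mathbb K}(\gamma)$ (so $\bar d_2\ne0$), and put $\Lambda_\gamma=\mathbb Z(d_1,d_2)+\mathbb K\oplus\mathbb E_8(2)$. Regard $\mathbf v$ as a primitive isotropic vector of $\Lambda_\gamma$. (1) If $\gamma\equiv(\frac12,\frac12,\frac12,0),(\frac12,\frac12,0,0),(\frac12,\frac12,0,\frac12),(0,\frac12,\frac12,\frac12)\bmod\mathbb K$, then $\mathbf v$ has level $1$ in $\Lambda_\gamma$. (2) If $\gamma\equiv(0,0,\frac12,\frac12),(\frac12,0,\frac12,\frac12)\bmod\mathbb K$, then $\mathbf v$ has level $2$ in $\Lambda_\gamma$.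
   Context: $\mathbb U(2)$ is the lattice $\mathbb Z^2$ with Gram matrix $\binom{0\,2}{2\,0}$; vectors of $\mathbb K\otimes\mathbb Q$ are written as $(a,b,c,e)$ in the basis given by the two standard bases, so $\mathbb K^\vee=(\frac12\mathbb Z)^4$. $\mathbb E_8$ is the negative-definite $E_8$ lattice and $\mathbb E_8(2)$ has form doubled. $A_L=L^\vee/L$ with discriminant quadratic form $q_L$ (valued in $\mathbb Z/2$ here); $\gamma$ is odd if $q_{\mathbb K}(\gamma)=1$. The level of a primitive isotropic $\mathbf v\in L$ is the positive integer $\ell$ with $\langle\mathbf v,L\rangle=\ell\mathbb Z$. *)

(* Lattices are modelled inside Q-vector spaces of row vectors. *)
From mathcomp Require Import all_boot all_order all_algebra.
Set Implicit Arguments. Unset Strict Implicit. Unset Printing Implicit Defensive.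
Import Order.TTheory GRing.Theory Num.Theory.
Local Open Scope ring_scope.

Definition is_int (r : rat) : Prop := exists z : int, r = z%:~R.
Definition intvec n (x : 'rV[rat]_n) : Prop := forall i, is_int (x 0 i).

Definition bform n (G : 'M[rat]_n) (x y : 'rV[rat]_n) : rat := (x *m G *m y^T) 0 0.

(* Gram matrix of K = U(2) (+) U(2), basis (a,b,c,e) *)
Definition gramK : 'M[rat]_4 :=
  \matrix_(i, j) (if ((i : nat), (j : nat)) \in [:: (0,1); (1,0); (2,3); (3,2)]%N
                  then 2 else 0).

(* E8 Dynkin diagram (Bourbaki numbering 1..8, here 0..7): chain 1-3-4-5-6-7-8, 2-4 *)
Definition e8_edge (i j : nat) : bool :=
  ((i, j) \in [:: (0,2); (2,3); (3,4); (4,5); (5,6); (6,7); (1,3)]%N) ||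
  ((j, i) \in [:: (0,2); (2,3); (3,4); (4,5); (5,6); (6,7); (1,3)]%N).

(* Gram matrix of the negative definite E8 lattice (= - Cartan matrix) *)
Definition gramE8 : 'M[rat]_8 :=
  \matrix_(i, j) (if i == j then -2 else if e8_edge i j then 1 else 0).
Definition gramE8_2 : 'M[rat]_8 := 2 *: gramE8.

Definition bK := bform gramK.
Definition bE := bform gramE8_2.

Definition dualK (x : 'rV[rat]_4) : Prop := forall y, intvec y -> is_int (bK x y).
Definition dualE (x : 'rV[rat]_8) : Prop := forall y, intvec y -> is_int (bE x y).

Definition eqmod2 (r s : rat) : Prop := exists z : int, r - s = (2 * z)%:~R.

(* ambient space K (x) Q  (+)  E8(2) (x) Q *)
Definition V := ('rV[rat]_4 * 'rV[rat]_8)%type.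
Definition bL (x y : V) : rat := bK x.1 y.1 + bE x.2 y.2.
Definition scv (k : int) (x : V) : V := (k%:~R *: x.1, k%:~R *: x.2).

(* Lambda_gamma = Z (d1,d2) + K (+) E8(2) *)
Definition Lambda (d1 : 'rV[rat]_4) (d2 : 'rV[rat]_8) (x : V) : Prop :=
  exists n : int, intvec (x.1 - n%:~R *: d1) /\ intvec (x.2 - n%:~R *: d2).

Definition isotropic (v : V) : Prop := bL v v = 0.
Definition primitive (L : V -> Prop) (v : V) : Prop :=
  L v /\ forall (x : V) (k : int), L x -> v = scv k x -> k = 1 \/ k = -1.

Definition has_level (L : V -> Prop) (v : V) (l : nat) : Prop :=
  isotropic v /\ primitive L v /\ (0 < l)%N /\
  forall r : rat, (exists x, L x /\ bL v x = r) <-> (exists k : int, r = ((l%:Z) * k)%:~R).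

Definition vecK (a b c e : rat) : 'rV[rat]_4 := \row_(i < 4) [:: a; b; c; e]`_i.
Definition vv : V := (vecK 1 0 0 0, 0).

(* the class of d1 in A_K = K^vee / K is that of the given vector *)
Definition in_class (d1 c : 'rV[rat]_4) : Prop := intvec (d1 - c).

(* Pairing with vv reads off twice the b-coordinate, and Lambda_gamma is spanned by
   (d1, d2) over K (+) E8(2), so <vv, Lambda_gamma> = 2Z + cZ = gcd(2, c)Z with
   c = 2 (d1)_b, an integer because d1 lies in K^vee = (1/2 Z)^4; c is odd for the classes
   in (1) and even for those in (2).  For primitivity, write vv = k x with
   x = n (d1, d2) + w, w in K (+) E8(2): then n (d1)_b and n (d1)_e are integers, which
   makes n q(d1) = 2 ((2 (d1)_a) n (d1)_b + (2 (d1)_c) n (d1)_e) even; since q(gamma) is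
   odd, n is even, so the K-part of x is integral (2 d1 lies in K) and k divides the
   a-coordinate 1 of vv. *)

From mathcomp Require Import all_boot all_order all_algebra ring zify.
Import Order.TTheory GRing.Theory Num.Theory.
Local Open Scope ring_scope.
Set Implicit Arguments.
Unset Strict Implicit.

Notation ia := (@Ordinal 4 0 isT).
Notation ib := (@Ordinal 4 1 isT).
Notation ic := (@Ordinal 4 2 isT).
Notation ie := (@Ordinal 4 3 isT).

Lemma is_intP (r : rat) : reflect (is_int r) (r \is a Num.int).
Proof. exact: intrP. Qed.

Lemma mulz_eq1 (k j : int) : k * j = 1 -> k = 1 \/ k = -1.
Proof.
move=> /(congr1 absz); rewrite abszM => /eqP; rewrite muln_eq1 => /andP[/eqP k1 _].
by case: k k1 => [[|[|]]|[|]] //= _; [left | right].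
Qed.

Lemma int_combP (m n r : int) :
  (exists u v, r = u * m + v * n) <-> (gcdz m n %| r)%Z.
Proof.
split=> [[u [v ->]] | /dvdzP[q ->]].
  by rewrite rpredD ?dvdz_mull ?dvdz_gcdl ?dvdz_gcdr.
have [u [v uvE]] := Bezoutz m n.
by exists (q * u), (q * v); rewrite -uvE; ring.
Qed.

Lemma intvec_delta i : intvec (delta_mx 0 i : 'rV[rat]_4).
Proof. by move=> j; apply/is_intP; rewrite mxE rpred_nat. Qed.

Lemma intvecZ (k : int) (x : 'rV[rat]_4) : intvec x -> intvec (k%:~R *: x).
Proof.
by move=> hx i; apply/is_intP; rewrite mxE rpredM ?intr_int //; apply/is_intP.
Qed.

Lemma bKE x y : bK x y =
  2 * (x 0 ia * y 0 ib + x 0 ib * y 0 ia + x 0 ic * y 0 ie + x 0 ie * y 0 ic).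
Proof.
rewrite /bK /bform !mxE !big_ord_recl big_ord0 /=.
rewrite !mxE !big_ord_recl !big_ord0 /= !mxE /=.
have [-> -> -> ->] : [/\ lift ord0 (lift ord0 (lift ord0 ord0)) = ie,
    lift ord0 (lift ord0 ord0) = ic, lift ord0 ord0 = ib & ord0 = ia :> 'I_4].
  by split; apply: val_inj.
ring.
Qed.

Lemma bL_vv x : bL vv x = 2 * x.1 0 ib.
Proof. by rewrite /bL /bE /bform mul0mx mul0mx mxE addr0 bKE !mxE /=; ring. Qed.

Lemma dualK_twice_int d : dualK d -> forall i, 2 * d 0 i \is a Num.int.
Proof.
move=> hd i; have pair_delta j : bK d (delta_mx 0 j) \is a Num.int.
  exact/is_intP/hd/intvec_delta.
case: i => [[|[|[|[|m]]]] lt_m4] //; rewrite (bool_irrelevance lt_m4 isT).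
- by have := pair_delta ib; rewrite bKE !mxE /= !(mulr0, mulr1, addr0, add0r).
- by have := pair_delta ia; rewrite bKE !mxE /= !(mulr0, mulr1, addr0, add0r).
- by have := pair_delta ie; rewrite bKE !mxE /= !(mulr0, mulr1, addr0, add0r).
- by have := pair_delta ic; rewrite bKE !mxE /= !(mulr0, mulr1, addr0, add0r).
Qed.

Lemma dualK_mul_norm_even d (n : int) : dualK d ->
  n%:~R * d 0 ib \is a Num.int -> n%:~R * d 0 ie \is a Num.int ->
  eqmod2 (n%:~R * bK d d) 0.
Proof.
move=> hd nb ne; have /is_intP[p pE] : (2 * d 0 ia) * (n%:~R * d 0 ib) +
    (2 * d 0 ic) * (n%:~R * d 0 ie) \is a Num.int.
  by apply: rpredD; apply: rpredM; rewrite ?(dualK_twice_int hd).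
by exists p; rewrite subr0 intrM -pE bKE; ring.
Qed.

Lemma even_of_mul_odd (n : int) q : eqmod2 q 1 -> eqmod2 (n%:~R * q) 0 -> (2 %| n)%Z.
Proof.
move=> [t /eqP]; rewrite subr_eq => /eqP -> [s]; rewrite subr0 => nqE.
have {}nqE : n * (2 * t + 1) = 2 * s.
  by apply: (@intr_inj rat); rewrite -nqE !(intrM, intrD).
by apply/dvdzP; exists (s - n * t); lia.
Qed.

Section LevelOfVv.

Variables (d1 : 'rV[rat]_4) (d2 : 'rV[rat]_8).
Hypotheses (hd1 : dualK d1) (hodd : eqmod2 (bK d1 d1) 1).

Lemma Lambda_vv_primitive : primitive (Lambda d1 d2) vv.
Proof.
split.
  exists 0; rewrite !scale0r !subr0; split=> i; apply/is_intP; rewrite mxE //.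
  by case: i => [[|[|[|[|m]]]] lt_m4].
move=> x k [n [hw _]] [hv _].
have w_int i : x.1 0 i - n%:~R * d1 0 i \is a Num.int.
  by have /is_intP := hw i; rewrite !mxE.
have vE i : vecK 1 0 0 0 0 i = k%:~R * x.1 0 i by rewrite hv mxE.
have [xa1 xb0 xe0] : [/\ k%:~R * x.1 0 ia = 1, k%:~R * x.1 0 ib = 0
    & k%:~R * x.1 0 ie = 0] by rewrite -!vE !mxE.
have k_neq0 : k%:~R != 0 :> rat.
  by apply: contra_eq_neq xa1 => ->; rewrite mul0r eq_sym oner_neq0.
move/eqP: xb0; rewrite mulf_eq0 (negbTE k_neq0) => /eqP xb0.
move/eqP: xe0; rewrite mulf_eq0 (negbTE k_neq0) => /eqP xe0.
have nd_int i : x.1 0 i = 0 -> n%:~R * d1 0 i \is a Num.int.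
  by move=> xi0; rewrite -[_ * _]opprK -(sub0r (_ * _)) -xi0 rpredN.
have /dvdzP[m nE] : (2 %| n)%Z.
  exact: even_of_mul_odd hodd (dualK_mul_norm_even hd1 (nd_int _ xb0) (nd_int _ xe0)).
have /is_intP[j xaE] : x.1 0 ia \is a Num.int.
  have -> : x.1 0 ia = m%:~R * (2 * d1 0 ia) + (x.1 0 ia - n%:~R * d1 0 ia).
    by rewrite nE intrM; ring.
  by rewrite rpredD // rpredM ?intr_int ?dualK_twice_int.
apply: (@mulz_eq1 k j); apply: (@intr_inj rat).
by rewrite intrM -xaE xa1.
Qed.

Lemma Lambda_vv_pairing (c : int) r : 2 * d1 0 ib = c%:~R ->
  (exists x, Lambda d1 d2 x /\ bL vv x = r) <-> exists u v : int, r = (u * 2 + v * c)%:~R.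
Proof.
move=> cE; split=> [[x [[n [hw _]] <-]] | [u [v ->]]].
  have [u uE] := hw ib; rewrite !mxE in uE.
  by exists u, n; rewrite bL_vv !(intrD, intrM) -uE -cE; ring.
exists (v%:~R *: d1 + u%:~R *: delta_mx 0 ib, v%:~R *: d2); split.
  exists v; rewrite /= [_ + _]addrC addKr subrr; split; first exact/intvecZ/intvec_delta.
  by move=> i; apply/is_intP; rewrite mxE.
by rewrite bL_vv !mxE eqxx /= !(intrD, intrM) -cE; ring.
Qed.

Lemma Lambda_vv_level (c : int) : 2 * d1 0 ib = c%:~R ->
  has_level (Lambda d1 d2) vv (gcdn 2 `|c|).
Proof.
move=> cE; split; last split; last split.
- by rewrite /isotropic bL_vv !mxE mulr0.
- exact: Lambda_vv_primitive.
- by rewrite gcdn_gt0.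
move=> r; rewrite (Lambda_vv_pairing r cE); split=> [[u [v ->]] | [k ->]].
  have /dvdzP[k ->] : (gcdz 2 c %| u * 2 + v * c)%Z by apply/int_combP; exists u, v.
  by exists k; rewrite mulrC.
have /int_combP[u [v uvE]] : (gcdz 2 c %| gcdz 2 c * k)%Z by apply/dvdz_mulr/dvdzz.
by exists u, v; rewrite -uvE.
Qed.

Lemma in_class_twice_b a b c e : in_class d1 (vecK a b c e) ->
  exists z : int, 2 * d1 0 ib = (z * 2)%:~R + 2 * b.
Proof. by move=> /(_ ib) [z]; rewrite !mxE /= => zE; exists z; rewrite intrM -zE; ring. Qed.

Lemma level1_of_class a c e : in_class d1 (vecK a (1/2) c e) ->
  has_level (Lambda d1 d2) vv 1.
Proof.
move=> /in_class_twice_b[z zE].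
have <- : gcdn 2 `|z * 2 + 1| = 1%N by have := gcdzMDl z 2 1; rewrite gcdz1 => -[].
by apply: Lambda_vv_level; rewrite zE intrD; field.
Qed.

Lemma level2_of_class a c e : in_class d1 (vecK a 0 c e) ->
  has_level (Lambda d1 d2) vv 2.
Proof.
move=> /in_class_twice_b[z zE].
have <- : gcdn 2 `|z * 2| = 2%N by have := gcdzMl 2 z => -[].
by apply: Lambda_vv_level; rewrite zE mulr0 addr0.
Qed.

End LevelOfVv.

Theorem lemma6p3 (d1 : 'rV[rat]_4) (d2 : 'rV[rat]_8)
  (hd1 : dualK d1)
  (hgam0 : ~ intvec d1)
  (hodd : eqmod2 (bK d1 d1) 1)
  (hd2 : dualE d2)
  (hq : eqmod2 (bE d2 d2) (bK d1 d1)) :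
  ((in_class d1 (vecK (1/2) (1/2) (1/2) 0) \/ in_class d1 (vecK (1/2) (1/2) 0 0) \/
    in_class d1 (vecK (1/2) (1/2) 0 (1/2)) \/ in_class d1 (vecK 0 (1/2) (1/2) (1/2))) ->
   has_level (Lambda d1 d2) vv 1)
  /\
  ((in_class d1 (vecK 0 0 (1/2) (1/2)) \/ in_class d1 (vecK (1/2) 0 (1/2) (1/2))) ->
   has_level (Lambda d1 d2) vv 2).
Proof.
split.
  by move=> [h|[h|[h|h]]]; exact: (level1_of_class d2 hd1 hodd h).
by move=> [h|h]; exact: (level2_of_class d2 hd1 hodd h).
Qed.
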